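(* Let $(\mathcal G,\mathcal D,\{\mathcal D_1,\ldots,\mathcal D_n\})$ be a minimal decomposition of a closed triangulated surface $\mathcal T$. Then every triangle of $\mathcal G$ intersects the boundary $\partial\mathcal G$ of $\mathcal G$.
   Context: A triangulated surface is a finite simplicial complex whose underlying space is a connected compact surface; it is closed if the surface has empty boundary; $\partial$ denotes the induced triangulation of the boundary. The valence of a vertex is the number of triangles containing it. A decomposition of a closed triangulated surface $\mathcal T$ is a triple $(\mathcal G,\mathcal D,\{\mathcal D_1,\ldots,\mathcal D_n\})$, $n\geq0$, of sub-triangulations (subcomplexes which are triangulated surfaces) of $\mathcal T$ such that $\mathcal D,\mathcal D_1,\ldots,\mathcal D_n$ are triangulated discs, the interior of $\mathcal D$ contains a vertex of maximal valence in $\mathcal T$, their union is $\mathcal T$, and any two of them intersect in a triangulated circle or not at all. A decomposition is minimal if the number of triangles of $\mathcal G$ is minimal among all decompositions of $\mathcal T$. *)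

From mathcomp Require Import all_boot.
Set Implicit Arguments. Unset Strict Implicit. Unset Printing Implicit Defensive.

(* A pure 2-dimensional finite simplicial complex on the vertex type V is
   represented by its set of triangles K : {set {set V}}; its faces are all
   nonempty subsets of its triangles. *)
Section Complexes.
Variable V : finType.
Implicit Types (K T : {set {set V}}) (v w : V).

Definition triangles_ok K : Prop := forall t, t \in K -> #|t| = 3.

Definition verts K : {set V} := \bigcup_(t in K) t.
Definition edges K : {set {set V}} :=
  [set e : {set V} | (#|e| == 2) && [exists t in K, e \subset t]].

Definition edge_deg K (e : {set V}) : nat := #|[set t in K | e \subset t]|.

Definition valence K v : nat := #|[set t in K | v \in t]|.

Definition bd_edges K : {set {set V}} := [set e in edges K | edge_deg K e == 1].
Definition bd_verts K : {set V} := \bigcup_(e in bd_edges K) e.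

Definition adj K : rel V := fun u w => [exists t in K, (u \in t) && (w \in t)].
Definition connected_cx K : Prop :=
  forall u w, u \in verts K -> w \in verts K -> connect (adj K) u w.

Definition link_verts K v : {set V} :=
  [set w | (w != v) && [exists t in K, (v \in t) && (w \in t)]].
Definition link_rel K v : rel V := fun a b =>
  [exists t in K, [&& v \in t, a \in t, b \in t, a != v, b != v & a != b]].

(* Combinatorial triangulated (connected, compact) surface, possibly with
   boundary: nonempty, pure 2-dimensional, connected, every edge lies in one
   or two triangles, and the link of every vertex is connected (hence, edges
   having degree <= 2, a path or a cycle). *)
Definition tri_surface K : Prop :=
  [/\ K != set0, triangles_ok K, connected_cx K,
      (forall e, e \in edges K -> edge_deg K e = 1 \/ edge_deg K e = 2) &
      (forall v a b, v \in verts K -> a \in link_verts K v -> b \in link_verts K v ->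
          connect (link_rel K v) a b)].

Definition closed_surface K : Prop := tri_surface K /\ bd_edges K = set0.

(* Triangulated disc: a triangulated surface with nonempty boundary and Euler
   characteristic  V - E + F = 1 (by the classification of compact surfaces
   this characterizes the disc). *)
Definition tri_disc K : Prop :=
  [/\ tri_surface K, bd_edges K != set0 &
      #|verts K| + #|K| = #|edges K| + 1].

Definition subtri K T : Prop := K \subset T /\ tri_surface K.

(* The intersection of the (face-closed) subcomplexes generated by K1 and K2:
   common vertices, common edges, common triangles. *)
Definition cx_disjoint K1 K2 : Prop := verts K1 :&: verts K2 = set0.
Definition cx_meet_circle K1 K2 : Prop :=
  let W := verts K1 :&: verts K2 in
  let E := edges K1 :&: edges K2 in
  [/\ K1 :&: K2 = set0, W != set0,
      (forall w, w \in W -> #|[set e in E | w \in e]| = 2) &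
      (forall u w, u \in W -> w \in W ->
         connect (fun a b => [exists e in E, [&& a \in e, b \in e & a != b]]) u w)].

Definition meet_ok K1 K2 : Prop := cx_disjoint K1 K2 \/ cx_meet_circle K1 K2.

Definition decomposition T G D (Ds : seq {set {set V}}) : Prop :=
  [/\ subtri G T /\ subtri D T, (forall Di, Di \in Ds -> subtri Di T),
      tri_disc D /\ (forall Di, Di \in Ds -> tri_disc Di),
      (exists2 v, v \in verts D :\: bd_verts D &
         forall w, valence T w <= valence T v) &
      G :|: D :|: \bigcup_(Di <- Ds) Di = T /\
      (let P := G :: D :: Ds in
       forall i j, i < j < size P -> meet_ok (nth set0 P i) (nth set0 P j))].

Definition minimal_decomposition T G D (Ds : seq {set {set V}}) : Prop :=
  decomposition T G D Ds /\
  (forall G' D' Ds', decomposition T G' D' Ds' -> #|G| <= #|G'|).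

End Complexes.

From mathcomp Require Import all_boot zify.
Set Implicit Arguments. Unset Strict Implicit. Unset Printing Implicit Defensive.

(* If a triangle t of G had no vertex on the boundary of G, moving t from G to
   the list of discs would give a decomposition with a smaller G.  This needs
   two facts.  First, no other piece meets t: every triangle of T at an
   interior vertex of G already lies in G.  Second, G minus t is still a
   triangulated surface meeting the disc t along its boundary circle; the only
   delicate point is the link of a vertex v of t, which in G is a cycle through
   the edge opposite to v in t, and stays connected once that edge is removed. *)

Lemma handshake (X : finType) (r : rel X) :
  symmetric r -> irreflexive r -> ~~ odd (\sum_x #|[set y | r x y]|).
Proof.
move=> r_sym r_irr.
pose P := [set p : X * X | r p.1 p.2].
pose L := [set p : X * X | enum_rank p.1 < enum_rank p.2].
have -> : \sum_x #|[set y | r x y]| = #|P|.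
  transitivity (\sum_x \sum_y (r x y : nat)).
    apply: eq_bigr => x _; rewrite -sum1_card big_mkcond.
    by apply: eq_bigr => y _; rewrite inE.
  rewrite pair_bigA -sum1_card [RHS]big_mkcond; apply: eq_bigr => p _; rewrite inE.
  by case: (r _ _).
have swap_inj : injective (fun p : X * X => (p.2, p.1)) by move=> [a b] [c d] [-> ->].
rewrite -(cardsID L P).
have -> : P :\: L = [set (p.2, p.1) | p in P :&: L].
  apply/setP => -[a b]; rewrite !inE /=; apply/andP/imsetP => [[ab rab] | [[c d]]].
    exists (b, a); rewrite // !inE /= r_sym rab /=.
    rewrite ltn_neqAle leqNgt ab andbT.
    by apply/eqP => /val_inj/enum_rank_inj ba; rewrite ba r_irr in rab.
  move=> /setIP []; rewrite !inE /= => rcd cd [-> ->].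
  by rewrite r_sym rcd -leqNgt ltnW.
by rewrite card_imset // addnn odd_double.
Qed.

Section Surfaces.
Variable V : finType.
Implicit Types (K G T X : {set {set V}}) (t u s e : {set V}) (v w x y z : V).

Lemma exists_neq u w : 1 < #|u| -> exists2 x, x \in u & x != w.
Proof.
move=> u_gt1; have /set0Pn [x] : u :\ w != set0.
  by rewrite -card_gt0; move: u_gt1; rewrite (cardsD1 w); case: (w \in u); lia.
by rewrite !inE => /andP [xw xu]; exists x.
Qed.

Lemma exists_neq2 u w1 w2 : 2 < #|u| ->
  exists2 x, x \in u & (x != w1) && (x != w2).
Proof.
move=> u_gt2; have /set0Pn [x] : u :\ w1 :\ w2 != set0.
  rewrite -card_gt0; move: u_gt2; rewrite (cardsD1 w1) (cardsD1 w2 (u :\ w1)).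
  by case: (w1 \in u); case: (w2 \in u :\ w1); lia.
by rewrite !inE => /and3P [xw2 xw1 xu]; exists x; rewrite ?xw1.
Qed.

Lemma eq_set3 u x y z : #|u| = 3 -> x \in u -> y \in u -> z \in u ->
  x != y -> x != z -> y != z -> u = [set x; y; z].
Proof.
move=> u3 xu yu zu xy xz yz; apply/eqP; rewrite eq_sym eqEcard u3.
rewrite !subUset !sub1set xu yu zu /= setUC !cardsU1 cards1 !inE.
by rewrite xy ![z == _]eq_sym (negbTE xz) (negbTE yz).
Qed.

Lemma verts_tri K u x : u \in K -> x \in u -> x \in verts K.
Proof. by move=> uK xu; apply/bigcupP; exists u. Qed.

Lemma vertsP K x : reflect (exists2 u, u \in K & x \in u) (x \in verts K).
Proof. exact: bigcupP. Qed.

Lemma edgesP K e :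
  reflect (#|e| = 2 /\ exists2 u, u \in K & e \subset u) (e \in edges K).
Proof.
rewrite inE; apply: (iffP andP) => [[/eqP e2 /existsP [u /andP [uK eu]]] | [e2 [u uK eu]]].
  by split => //; exists u.
by split; [apply/eqP | apply/existsP; exists u; rewrite uK].
Qed.

Lemma edges_tri K u x y : u \in K -> x \in u -> y \in u -> x != y ->
  [set x; y] \in edges K.
Proof.
move=> uK xu yu xy; apply/edgesP; split; first by rewrite cards2 xy.
by exists u; rewrite // subUset !sub1set xu yu.
Qed.

Lemma vertsS K1 K2 : K1 \subset K2 -> verts K1 \subset verts K2.
Proof.
move=> K12; apply/subsetP => x /vertsP [u uK1 xu]; exact: verts_tri (subsetP K12 u uK1) xu.
Qed.

Lemma edgesS K1 K2 : K1 \subset K2 -> edges K1 \subset edges K2.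
Proof.
move=> K12; apply/subsetP => e /edgesP [e2 [u uK1 eu]].
by apply/edgesP; split => //; exists u; rewrite ?(subsetP K12).
Qed.

Lemma link_relS {K1 K2} v x y : K1 \subset K2 ->
  link_rel K1 v x y -> link_rel K2 v x y.
Proof.
move=> K12 /existsP [u /andP [uK1 h]].
by apply/existsP; exists u; rewrite (subsetP K12).
Qed.

Lemma link_vertsS K1 K2 v : K1 \subset K2 -> link_verts K1 v \subset link_verts K2 v.
Proof.
move=> K12; apply/subsetP => x; rewrite !inE => /andP [xv /existsP [u /andP [uK1 h]]].
by rewrite xv; apply/existsP; exists u; rewrite (subsetP K12).
Qed.

Lemma link_rel_sym K v : symmetric (link_rel K v).
Proof.
move=> x y; apply/existsP/existsP => -[u /and4P [uK vu xu /and4P [yu xv yv xy]]];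
  by exists u; rewrite uK vu xu yu xv yv eq_sym xy.
Qed.

Lemma surface_tri3 K u : tri_surface K -> u \in K -> #|u| = 3.
Proof. by case=> _ K3 _ _ _; apply: K3. Qed.

Lemma interior_edge_deg G v e : tri_surface G -> v \notin bd_verts G ->
  e \in edges G -> v \in e -> edge_deg G e = 2.
Proof.
case=> _ _ _ degG _ vNbd eG ve; case: (degG e eG) => // e1.
by case/negP: vNbd; apply/bigcupP; exists e; rewrite // inE eG e1.
Qed.

Lemma edge_deg2_closed T G e : G \subset T -> tri_surface T ->
  e \in edges G -> edge_deg G e = 2 -> forall s, s \in T -> e \subset s -> s \in G.
Proof.
move=> GT [_ _ _ degT _] eG eG2 s sT es.
have eT : e \in edges T := subsetP (edgesS GT) e eG.
have sub : [set s in G | e \subset s] \subset [set s in T | e \subset s].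
  by apply/subsetP => r; rewrite !inE => /andP [rG ->]; rewrite (subsetP GT).
have : [set s in G | e \subset s] == [set s in T | e \subset s].
  rewrite eqEcard sub /=; move: eG2; rewrite /edge_deg => ->.
  by case: (degT e eT); rewrite /edge_deg => ->.
by move/eqP/setP/(_ s); rewrite !inE sT es andbT => ->.
Qed.

Section Star.
Variables (T G : {set {set V}}) (v : V).
Hypotheses (GT : G \subset T) (surfT : tri_surface T) (surfG : tri_surface G)
  (vG : v \in verts G) (vNbd : v \notin bd_verts G).

Let spoke : pred V := fun x => (x != v) && ([set v; x] \in edges G).

Lemma tri_at_spoke u x : u \in T -> v \in u -> x \in u -> x != v ->
  spoke x -> u \in G.
Proof.
move=> uT vu xu xv /andP [_ eG].
apply: (edge_deg2_closed GT surfT eG _ uT).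
  exact: interior_edge_deg surfG vNbd eG (setU11 v [set x]).
by rewrite subUset !sub1set vu xu.
Qed.

(* The triangles around v in T form a connected cycle in the link of v, and
   every edge of G at v is shared by two triangles of G, so one triangle of G
   at v propagates along the whole link. *)
Lemma star_sub s : s \in T -> v \in s -> s \in G.
Proof.
move=> sT vs; have [_ _ _ _ linkT] := surfT.
case/vertsP: vG => t0 t0G vt0.
have [a at0 av] : exists2 a, a \in t0 & a != v.
  by apply: exists_neq; rewrite (surface_tri3 surfG t0G).
have [b bs bv] : exists2 b, b \in s & b != v.
  by apply: exists_neq; rewrite (surface_tri3 surfT sT).
have spoke_closed : closed (link_rel T v) spoke.
  move=> x y /existsP [u /and4P [uT vu xu /and4P [yu xv yv _]]].
  rewrite -!topredE /=; apply/idP/idP.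
    by move/(tri_at_spoke uT vu xu xv) => uG; rewrite /spoke yv (edges_tri uG) // eq_sym.
  by move/(tri_at_spoke uT vu yu yv) => uG; rewrite /spoke xv (edges_tri uG) // eq_sym.
have a_spoke : spoke a by rewrite /spoke av (edges_tri t0G) // eq_sym.
have link_ab : connect (link_rel T v) a b.
  apply: linkT; first exact: verts_tri sT vs.
    by rewrite inE av; apply/existsP; exists t0; rewrite (subsetP GT) ?vt0.
  by rewrite inE bv; apply/existsP; exists s; rewrite sT vs.
apply: (tri_at_spoke sT vs bs bv).
by have := closed_connect spoke_closed link_ab; rewrite -!topredE /= => <-.
Qed.

End Star.

Lemma interior_link_deg G v x : tri_surface G -> v \notin bd_verts G ->
  x \in link_verts G v -> #|[set y | link_rel G v x y]| = 2.
Proof.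
move=> surfG vNbd; rewrite inE => /andP [xv /existsP [u /and3P [uG vu xu]]].
have vx : v != x by rewrite eq_sym.
have eG := edges_tri uG vu xu vx.
have tri_inj : {in [set y | link_rel G v x y] &, injective (fun y => [set v; x; y])}.
  move=> y1 y2; rewrite inE => /existsP [? /and4P [_ _ _ /and4P [_ _ y1v xy1]]] _ E.
  have : y1 \in [set v; x; y2] by rewrite -E !inE eqxx orbT.
  by rewrite !inE (negbTE y1v) eq_sym (negbTE xy1) => /eqP.
rewrite -(card_in_imset tri_inj) -(interior_edge_deg surfG vNbd eG (setU11 v _)).
apply: eq_card => s; apply/imsetP/idP => [[y] | ].
  rewrite inE => /existsP [r /and4P [rG vr xr /and4P [yr _ yv xy]]] ->.
  have vy : v != y by rewrite eq_sym.
  rewrite -(eq_set3 (surface_tri3 surfG rG) vr xr yr vx vy xy) inE rG.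
  by rewrite subUset !sub1set vr xr.
rewrite inE => /andP [sG]; rewrite subUset !sub1set => /andP [vs xs].
have [y ys /andP [yv yx]] : exists2 y, y \in s & (y != v) && (y != x).
  by apply: exists_neq2; rewrite (surface_tri3 surfG sG).
have vy : v != y by rewrite eq_sym.
have xy : x != y by rewrite eq_sym.
exists y; last exact: eq_set3 (surface_tri3 surfG sG) vs xs ys vx vy xy.
by rewrite inE; apply/existsP; exists s; rewrite sG vs xs ys xv yv xy.
Qed.

Lemma verts_set1 t : verts [set t] = t.
Proof. by rewrite /verts big_set1. Qed.

Lemma edges_set1 t : edges [set t] = [set e : {set V} | e \subset t & #|e| == 2].
Proof.
apply/setP => e; rewrite !inE andbC; congr (_ && _).
by apply/existsP/idP => [[u /andP [/set1P ->]] | et] //; exists t; rewrite set11.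
Qed.

Lemma link_rel_setD1 G t v x y : link_rel G v x y ->
  link_rel (G :\ t) v x y \/ [/\ v \in t, x \in t & y \in t].
Proof.
case/existsP => u /and4P [uG vu xu /and4P [yu xv yv xy]].
have [<- | ut] := eqVneq u t; first by right.
by left; apply/existsP; exists u; rewrite !inE ut uG vu xu yu xv yv xy.
Qed.

Section RemoveTriangle.
Variables (G : {set {set V}}) (t : {set V}).
Hypotheses (surfG : tri_surface G) (tG : t \in G)
  (tNbd : forall w, w \in t -> w \notin bd_verts G).
Let G' := G :\ t.
Let subG' : G' \subset G := subsetDl G [set t].

Lemma common_tri_setD1 x y : x \in t -> y \in t -> x != y ->
  exists2 u, u \in G' & (x \in u) && (y \in u).
Proof.
move=> xt yt xy; have e_t : [set x; y] \subset t by rewrite subUset !sub1set xt yt.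
have := interior_edge_deg surfG (tNbd xt) (edges_tri tG xt yt xy) (setU11 x _).
rewrite /edge_deg (cardsD1 t) inE tG e_t add1n => -[] deg1.
have /card_gt0P [u] : 0 < #|[set s in G | [set x; y] \subset s] :\ t| by rewrite deg1.
by rewrite !inE subUset !sub1set => /and4P [ut uG xu yu]; exists u; rewrite ?inE ?ut ?xu.
Qed.

Section LinkAtVertex.
Variables (v a b : V).
Hypotheses (vt : v \in t) (at_ : a \in t) (bt : b \in t)
  (va : v != a) (vb : v != b) (ab : a != b).

Let t_eq : t = [set v; a; b].
Proof. exact: eq_set3 (surface_tri3 surfG tG) vt at_ bt va vb ab. Qed.

Lemma link_setD1_deg x : x \in link_verts G v -> x \notin t ->
  #|[set y | link_rel G' v x y]| = 2.
Proof.
move=> xL xNt; rewrite -(interior_link_deg surfG (tNbd vt) xL); apply: eq_card => y.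
rewrite !inE; apply/idP/idP; first exact: link_relS subG'.
by case/(link_rel_setD1 t) => // -[_ xt _]; rewrite xt in xNt.
Qed.

Lemma link_setD1_deg_end : #|[set y | link_rel G' v a y]| = 1.
Proof.
have aL : a \in link_verts G v.
  by rewrite inE eq_sym va; apply/existsP; exists t; rewrite tG vt at_.
have Lab : link_rel G v a b.
  by apply/existsP; exists t; rewrite tG vt at_ bt eq_sym va eq_sym vb ab.
have := interior_link_deg surfG (tNbd vt) aL; rewrite (cardsD1 b) inE Lab.
suff -> : [set y | link_rel G v a y] :\ b = [set y | link_rel G' v a y] by case.
apply/setP => y; rewrite !inE; apply/andP/idP => [[yb Lay] | L'ay].
  case: (link_rel_setD1 t Lay) => // -[_ _].
  case/existsP: Lay => _ /and4P [_ _ _ /and4P [_ _ yv ay]].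
  by rewrite t_eq !inE (negbTE yv) (negbTE yb) eq_sym (negbTE ay).
split; last exact: link_relS subG' L'ay.
apply: contraTneq L'ay => ->; apply/existsP => -[u /and4P [uG' vu au /and4P [bu _ _ _]]].
have u3 := surface_tri3 surfG (subsetP subG' u uG').
by move: uG'; rewrite !inE t_eq (eq_set3 u3 vu au bu va vb ab) eqxx.
Qed.

(* Otherwise the component of a in the link of v in G :\ t would have exactly
   one vertex of odd degree, namely a, contradicting the handshake lemma. *)
Lemma link_setD1_connect : connect (link_rel G' v) a b.
Proof.
apply/idPn => Nab; pose C := [set y | connect (link_rel G' v) a y].
pose r := [rel x y | (x \in C) && link_rel G' v x y].
have aC : a \in C by rewrite inE connect0.
have C_link x : x \in C -> x \in link_verts G v.
  have link_closed : closed (link_rel G' v) (link_verts G v).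
    move=> z y /(link_relS subG') /existsP [u /and4P [uG vu zu /and4P [yu zv yv _]]].
    by rewrite !inE zv yv; apply/idP/idP => _; apply/existsP; exists u; rewrite uG vu.
  rewrite inE => /(closed_connect link_closed) <-.
  by rewrite inE eq_sym va; apply/existsP; exists t; rewrite tG vt at_.
have r_sym : symmetric r.
  move=> x y; apply/andP/andP => -[xC Lxy]; rewrite link_rel_sym; split => //;
    by move: xC; rewrite !inE => /connect_trans; apply;
       apply/connect1; rewrite // link_rel_sym.
have r_irr : irreflexive r.
  move=> x /=; apply/negbTE/nandP; right.
  by apply/existsP => -[? /and4P [_ _ _ /and4P []]]; rewrite eqxx.
have deg_r x : x != a -> #|[set y | r x y]| = (x \in C) * 2.
  move=> xa; case xC: (x \in C); last by apply: eq_card0 => y; rewrite inE /= xC.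
  rewrite mul1n -(link_setD1_deg (C_link _ xC)).
    by apply: eq_card => y; rewrite [LHS]inE [RHS]inE /= xC.
  move: (C_link _ xC); rewrite t_eq !inE => /andP [xv _]; rewrite (negbTE xv) (negbTE xa).
  by apply: contraL xC => /eqP ->; rewrite inE.
have := handshake r_sym r_irr; rewrite (bigD1 a) //= (eq_bigr _ deg_r) -big_distrl /=.
have -> : #|[set y | r a y]| = 1.
  by rewrite -link_setD1_deg_end; apply: eq_card => y; rewrite [LHS]inE [RHS]inE /= aC.
by rewrite muln2 add1n /= odd_double.
Qed.

End LinkAtVertex.

Let t3 : #|t| = 3 := surface_tri3 surfG tG.

Lemma link_setD1_connected v x y : v \in verts G' ->
  x \in link_verts G' v -> y \in link_verts G' v -> connect (link_rel G' v) x y.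
Proof.
have [_ _ _ _ linkG] := surfG.
move=> vG' xL yL; have := linkG v x y (subsetP (vertsS subG') v vG')
  (subsetP (link_vertsS v subG') x xL) (subsetP (link_vertsS v subG') y yL).
apply: connect_sub => p q Lpq; case: (link_rel_setD1 t Lpq) => [|[vt pt qt]].
  exact: connect1.
case/existsP: Lpq => _ /and4P [_ _ _ /and4P [_ pv qv pq]].
by apply: link_setD1_connect; rewrite // eq_sym.
Qed.

Lemma adj_setD1 x y : adj G x y -> adj G' x y.
Proof.
case/existsP => u /and3P [uG xu yu].
have [ut | ut] := eqVneq u t; last first.
  by apply/existsP; exists u; rewrite !inE ut uG xu yu.
rewrite {u uG}ut in xu yu.
have [u uG' /andP [xu' yu']] : exists2 u, u \in G' & (x \in u) && (y \in u).
  have [-> | yx] := eqVneq y x; last by apply: common_tri_setD1; rewrite // eq_sym.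
  have [z zt zx] : exists2 z, z \in t & z != x by apply: exists_neq; rewrite t3.
  have [|u uG' /andP [xu' _]] := common_tri_setD1 xu zt; first by rewrite eq_sym.
  by exists u; rewrite ?xu'.
by apply/existsP; exists u; rewrite uG' xu' yu'.
Qed.

Lemma edge_deg_setD1 e : e \in edges G' -> edge_deg G' e = 1 \/ edge_deg G' e = 2.
Proof.
move=> eG'; have eG := subsetP (edgesS subG') e eG'.
have tris_setD1 : [set s in G' | e \subset s] = [set s in G | e \subset s] :\ t.
  by apply/setP => s; rewrite !inE andbA.
have [et | eNt] := boolP (e \subset t).
  case/edgesP: (eG) => /eqP /cards2P [x [y [_ exy]]] _.
  have xt : x \in t by rewrite (subsetP et) // exy !inE eqxx.
  have := interior_edge_deg surfG (tNbd xt) eG; rewrite exy !inE eqxx => /(_ isT).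
  by rewrite -exy /edge_deg tris_setD1 (cardsD1 t) inE tG et add1n => -[]; left.
have [_ _ _ degG _] := surfG.
suff -> : edge_deg G' e = edge_deg G e by apply: degG.
rewrite /edge_deg tris_setD1; apply: eq_card => s; rewrite !inE.
by have [-> | _] := eqVneq s t; rewrite ?(negbTE eNt) ?andbF.
Qed.

Lemma tri_surface_setD1 : tri_surface G'.
Proof.
have [_ G3 connG _ _] := surfG.
split.
- have [x xt] : exists x, x \in t by apply/card_gt0P; rewrite t3.
  have [y yt yx] : exists2 y, y \in t & y != x by apply: exists_neq; rewrite t3.
  have [|u uG' _] := common_tri_setD1 xt yt; first by rewrite eq_sym.
  by apply/set0Pn; exists u.
- by move=> u /(subsetP subG'); apply: G3.
- move=> x y /(subsetP (vertsS subG')) xG /(subsetP (vertsS subG')) yG.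
  by have := connG x y xG yG; apply: connect_sub => p q /adj_setD1 /connect1.
- exact: edge_deg_setD1.
- exact: link_setD1_connected.
Qed.

Lemma edges_set1_sub : edges [set t] \subset edges G'.
Proof.
apply/subsetP => e; rewrite edges_set1 inE => /andP [et /cards2P [x [y [xy exy]]]].
move: et; rewrite exy subUset !sub1set => /andP [xt yt].
have [u uG' /andP [xu yu]] := common_tri_setD1 xt yt xy.
exact: edges_tri uG' xu yu xy.
Qed.

Lemma meet_circle_setD1 : cx_meet_circle G' [set t].
Proof.
have tE : edges G' :&: edges [set t] = edges [set t].
  by apply/setIidPr; apply: edges_set1_sub.
rewrite /cx_meet_circle verts_set1 tE; split.
- by apply/setP => s; rewrite !inE andbC andbA andbN.
- have [x xt] : exists x, x \in t by apply/card_gt0P; rewrite t3.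
  have [y yt yx] : exists2 y, y \in t & y != x by apply: exists_neq; rewrite t3.
  have [|u uG' /andP [xu _]] := common_tri_setD1 xt yt; first by rewrite eq_sym.
  by apply/set0Pn; exists x; rewrite inE xt (verts_tri uG').
- move=> w; rewrite inE => /andP [_ wt].
  have set2_inj : {in t :\ w &, injective (fun z => [set w; z])}.
    move=> z1 z2; rewrite !inE => /andP [z1w _] _ E.
    have : z1 \in [set w; z2] by rewrite -E !inE eqxx orbT.
    by rewrite !inE (negbTE z1w) => /eqP.
  have -> : [set e in edges [set t] | w \in e] = [set [set w; z] | z in t :\ w].
    apply/setP => e; rewrite edges_set1 !inE; apply/idP/imsetP => [|[z]].
      case/andP=> /andP [et /cards2P [x [y [xy exy]]]].
      move: et; rewrite exy subUset !sub1set !inE => /andP [xt yt] /orP [] /eqP ->.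
        by exists y; rewrite // !inE yt eq_sym xy.
      by exists x; rewrite 1?setUC // !inE xt xy.
    rewrite !inE => /andP [zw zt] ->.
    by rewrite subUset !sub1set wt zt cards2 (eq_sym w) zw !inE eqxx.
  by rewrite (card_in_imset set2_inj); move: t3; rewrite (cardsD1 w) wt add1n => -[].
- move=> x y; rewrite !inE => /andP [_ xt] /andP [_ yt].
  have [-> | xy] := eqVneq x y; first exact: connect0.
  apply: connect1; apply/existsP; exists [set x; y].
  by rewrite edges_set1 !inE subUset !sub1set xt yt cards2 xy !eqxx orbT.
Qed.

End RemoveTriangle.

Lemma vertsI_setD1 G t X : [disjoint t & verts X] ->
  verts (G :\ t) :&: verts X = verts G :&: verts X.
Proof.
move=> tX; apply/setP => w; rewrite !inE.
have [wX | _] := boolP (w \in verts X); rewrite ?andbF ?andbT //.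
apply/idP/idP; first exact: subsetP (vertsS (subsetDl G [set t])) w.
case/vertsP => u uG wu; apply: (verts_tri _ wu); rewrite !inE uG andbT.
by apply: contraTneq wu => ->; rewrite (disjointFl tX wX).
Qed.

Lemma edgesI_setD1 G t X : [disjoint t & verts X] ->
  edges (G :\ t) :&: edges X = edges G :&: edges X.
Proof.
move=> tX; apply/setP => e; rewrite !in_setI.
have [eX | _] := boolP (e \in edges X); rewrite ?andbF ?andbT //.
apply/idP/idP; first exact: subsetP (edgesS (subsetDl G [set t])) e.
case/edgesP => e2 [u uG eu]; apply/edgesP; split=> //; exists u => //.
have [w we] : exists w, w \in e by apply/card_gt0P; rewrite e2.
have wX : w \in verts X.
  by case/edgesP: eX => _ [u' u'X eu']; apply: verts_tri u'X (subsetP eu' w we).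
rewrite !inE uG andbT; apply: contraTneq (subsetP eu w we) => ->.
by rewrite (disjointFl tX wX).
Qed.

Lemma meet_ok_setD1 G t X : [disjoint t & verts X] ->
  meet_ok G X -> meet_ok (G :\ t) X.
Proof.
move=> tX [GX | [GX0 W0 degW connW]].
  by left; rewrite /cx_disjoint vertsI_setD1.
right; rewrite /cx_meet_circle vertsI_setD1 // edgesI_setD1 //; split => //.
by apply/eqP; rewrite -subset0 -GX0 setSI // subsetDl.
Qed.

Section SingleTriangle.
Variable t : {set V}.
Hypothesis t3 : #|t| = 3.

Lemma edge_deg_set1 e : e \subset t -> edge_deg [set t] e = 1.
Proof.
move=> et; rewrite /edge_deg -(cards1 t); apply: eq_card => s; rewrite !inE.
by have [-> | _] := eqVneq s t; rewrite ?et.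
Qed.

Lemma tri_surface_set1 : tri_surface [set t].
Proof.
split.
- by apply/set0Pn; exists t; rewrite set11.
- by move=> u /set1P ->.
- move=> x y; rewrite verts_set1 => xt yt; apply: connect1; apply/existsP.
  by exists t; rewrite set11 xt yt.
- by move=> e; rewrite edges_set1 inE => /andP [et _]; left; apply: edge_deg_set1.
- move=> v x y; rewrite verts_set1 !inE => vt.
  move=> /andP [xv /existsP [_ /andP [/set1P -> /andP [_ xt]]]].
  move=> /andP [yv /existsP [_ /andP [/set1P -> /andP [_ yt]]]].
  have [-> | xy] := eqVneq x y; first exact: connect0.
  by apply: connect1; apply/existsP; exists t; rewrite set11 vt xt yt xv yv xy.
Qed.

Lemma tri_disc_set1 : tri_disc [set t].
Proof.
split; first exact: tri_surface_set1.
- have [x xt] : exists x, x \in t by apply/card_gt0P; rewrite t3.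
  have [y yt yx] : exists2 y, y \in t & y != x by apply: exists_neq; rewrite t3.
  have xy_t : [set x; y] \subset t by rewrite subUset !sub1set xt yt.
  apply/set0Pn; exists [set x; y]; rewrite inE edge_deg_set1 // eqxx andbT.
  by rewrite edges_set1 inE xy_t cards2 (eq_sym x) yx.
- by rewrite verts_set1 edges_set1 cards_draws t3 cards1.
Qed.

End SingleTriangle.

Lemma cx_disjointC K1 K2 : cx_disjoint K1 K2 -> cx_disjoint K2 K1.
Proof. by rewrite /cx_disjoint setIC. Qed.

Lemma cx_disjoint_set1 t X : [disjoint t & verts X] -> cx_disjoint [set t] X.
Proof. by rewrite /cx_disjoint verts_set1 => /disjoint_setI0. Qed.

Lemma interior_tri_disjoint T G t X : G \subset T -> tri_surface T ->
  tri_surface G -> t \in G -> (forall w, w \in t -> w \notin bd_verts G) ->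
  X \subset T -> meet_ok G X -> [disjoint t & verts X].
Proof.
move=> GT surfT surfG tG tNbd XT GX; apply/pred0P => w /=.
apply/negP => /andP [wt /vertsP [u uX wu]].
have wG := verts_tri tG wt.
have uG := star_sub GT surfT surfG wG (tNbd w wt) (subsetP XT u uX) wu.
case: GX => [/setP /(_ w) | [/setP /(_ u) GX0 _ _ _]].
  by rewrite !inE wG (verts_tri uX wu).
by move: GX0; rewrite !inE uG uX.
Qed.

Section MoveTriangle.
Variables (T G D : {set {set V}}) (Ds : seq {set {set V}}) (t : {set V}).
Hypotheses (surfT : tri_surface T) (decG : decomposition T G D Ds)
  (tG : t \in G) (tNbd : forall w, w \in t -> w \notin bd_verts G).

Lemma move_tri_meet_ok i j : let P := G :\ t :: D :: [set t] :: Ds in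
  i < j < size P -> meet_ok (nth set0 P i) (nth set0 P j).
Proof.
have [[[GT surfG] [DT _]] DsT _ _ [_ meetG]] := decG.
have tX X : X \subset T -> meet_ok G X -> [disjoint t & verts X].
  exact: interior_tri_disjoint GT surfT surfG tG tNbd.
have DsT' k : k < size Ds -> nth set0 Ds k \subset T.
  by move=> kDs; case: (DsT _ (mem_nth set0 kDs)).
case: i j => [|[|[|i]]] [|[|[|j]]] //= ij.
- exact: meet_ok_setD1 (tX D DT (meetG 0 1 isT)) (meetG 0 1 isT).
- by right; apply: meet_circle_setD1.
- exact: meet_ok_setD1 (tX _ (DsT' j ij) (meetG 0 j.+2 ij)) (meetG 0 j.+2 ij).
- by left; apply/cx_disjointC/cx_disjoint_set1/(tX D DT (meetG 0 1 isT)).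
- exact: meetG 1 j.+2 ij.
- by left; apply/cx_disjoint_set1/(tX _ (DsT' j ij) (meetG 0 j.+2 ij)).
- exact: meetG i.+2 j.+2 ij.
Qed.

Lemma decomposition_move_tri : decomposition T (G :\ t) D ([set t] :: Ds).
Proof.
have [[[GT surfG] subD] DsT [discD discDs] vmax [coverT _]] := decG.
have t3 := surface_tri3 surfG tG.
split=> //.
- by split=> //; split; [apply: subset_trans (subsetDl _ _) GT | apply: tri_surface_setD1].
- move=> Di; rewrite inE => /predU1P [-> | /DsT //].
  by split; [rewrite sub1set (subsetP GT) | apply: tri_surface_set1].
- by split=> // Di; rewrite inE => /predU1P [-> | /discDs //]; apply: tri_disc_set1.
split; last exact: move_tri_meet_ok.
rewrite -coverT big_cons; apply/setP => s; rewrite !inE.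
by have [-> | _] := eqVneq s t; rewrite ?tG ?orbT.
Qed.

End MoveTriangle.

End Surfaces.

Theorem mainTheorem5 (V : finType) (T G D : {set {set V}})
    (Ds : seq {set {set V}}) :
  closed_surface T ->
  minimal_decomposition T G D Ds ->
  forall t, t \in G -> t :&: bd_verts G != set0.
Proof.
move=> [surfT _] [decG minG] t tG; apply/negP => /eqP tNbd0.
have tNbd w : w \in t -> w \notin bd_verts G.
  by move=> wt; apply/negP => wbd; have := in_set0 w; rewrite -tNbd0 inE wt wbd.
have := minG _ _ _ (decomposition_move_tri surfT decG tG tNbd).
by rewrite (cardsD1 t G) tG add1n ltnn.
Qed.
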